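(* Let $\varepsilon\in(0,\tfrac14)$ and let $m>1$ be a constant such that $1-\frac1m\le\frac{\mathrm{e}-1}{2\sqrt{\pi}\,\mathrm{e}}\sqrt{\varepsilon}$. Let $F\in\mathrm{Lip}_{\rm loc}(\mathbb{R})$ satisfy $F(p)=\frac1m p^m$ for $p\in[0,1]$ and $F(p)\le p$ for $p\in[-1,0]$, and let $g(x)=\max\{1-|x|,0\}$ for $x\in\mathbb{R}$. Let $u^\varepsilon$ be the viscosity solution of $u^\varepsilon_t+F(u^\varepsilon_x)=\varepsilon u^\varepsilon_{xx}$ in $\mathbb{R}\times(0,\infty)$, $u^\varepsilon(\cdot,0)=g$, and let $u$ be the viscosity solution of $u_t+F(u_x)=0$ in $\mathbb{R}\times(0,\infty)$, $u(\cdot,0)=g$. Then \[ |u^\varepsilon(0,1)-u(0,1)|\ge\frac{\mathrm{e}-1}{2\sqrt{\pi}\,\mathrm{e}}\sqrt{\varepsilon}. \] *)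

From Stdlib Require Import Reals Lra.
From Coquelicot Require Import Coquelicot.
Open Scope R_scope.

(* Functions of (x,t) are written  w : R -> R -> R,  w x t. *)
Definition dt (w : R -> R -> R) (x t : R) : R := Derive (fun s => w x s) t.
Definition dx (w : R -> R -> R) (x t : R) : R := Derive (fun y => w y t) x.
Definition dxx (w : R -> R -> R) (x t : R) : R := Derive (fun y => dx w y t) x.

Definition C1_test (phi : R -> R -> R) : Prop :=
  forall x t,
    ex_derive (fun s => phi x s) t /\ ex_derive (fun y => phi y t) x /\
    continuity_2d_pt phi x t /\ continuity_2d_pt (dt phi) x t /\
    continuity_2d_pt (dx phi) x t.

Definition C21_test (phi : R -> R -> R) : Prop :=
  C1_test phi /\
  forall x t, ex_derive (fun y => dx phi y t) x /\ continuity_2d_pt (dxx phi) x t.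

Definition loc_max (u phi : R -> R -> R) (x0 t0 : R) : Prop :=
  exists d, 0 < d /\ forall x t, 0 < t -> Rabs (x - x0) < d -> Rabs (t - t0) < d ->
    u x t - phi x t <= u x0 t0 - phi x0 t0.
Definition loc_min (u phi : R -> R -> R) (x0 t0 : R) : Prop :=
  exists d, 0 < d /\ forall x t, 0 < t -> Rabs (x - x0) < d -> Rabs (t - t0) < d ->
    u x0 t0 - phi x0 t0 <= u x t - phi x t.

Definition cont_initial (u : R -> R -> R) (g : R -> R) : Prop :=
  (forall x t, 0 < t -> continuity_2d_pt u x t) /\
  (forall x, u x 0 = g x) /\
  (forall x e, 0 < e -> exists d, 0 < d /\
     forall y s, 0 <= s -> Rabs (y - x) < d -> s < d -> Rabs (u y s - g x) < e).

(* bounded and uniformly continuous on R x [0,oo): the class in which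
   viscosity solutions of the Cauchy problem are unique *)
Definition BUC (u : R -> R -> R) : Prop :=
  (exists M, forall x t, 0 <= t -> Rabs (u x t) <= M) /\
  (forall e, 0 < e -> exists d, 0 < d /\ forall x t y s, 0 <= t -> 0 <= s ->
     Rabs (x - y) < d -> Rabs (t - s) < d -> Rabs (u x t - u y s) < e).

Definition visc_sol_parabolic (eps : R) (F : R -> R) (g : R -> R) (u : R -> R -> R) : Prop :=
  cont_initial u g /\
  (forall phi x0 t0, C21_test phi -> 0 < t0 -> loc_max u phi x0 t0 ->
     dt phi x0 t0 + F (dx phi x0 t0) - eps * dxx phi x0 t0 <= 0) /\
  (forall phi x0 t0, C21_test phi -> 0 < t0 -> loc_min u phi x0 t0 ->
     dt phi x0 t0 + F (dx phi x0 t0) - eps * dxx phi x0 t0 >= 0).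

Definition visc_sol_HJ (F : R -> R) (g : R -> R) (u : R -> R -> R) : Prop :=
  cont_initial u g /\
  (forall phi x0 t0, C1_test phi -> 0 < t0 -> loc_max u phi x0 t0 ->
     dt phi x0 t0 + F (dx phi x0 t0) <= 0) /\
  (forall phi x0 t0, C1_test phi -> 0 < t0 -> loc_min u phi x0 t0 ->
     dt phi x0 t0 + F (dx phi x0 t0) >= 0).

Definition loc_lipschitz (F : R -> R) : Prop :=
  forall K, 0 < K -> exists L, forall p q, Rabs p <= K -> Rabs q <= K ->
    Rabs (F p - F q) <= L * Rabs (p - q).

Definition hat (x : R) : R := Rmax (1 - Rabs x) 0.

(* Both values are estimated by comparison with explicit smooth test functions on the
   half-plane [t >= 0], perturbed by [ga (K t + sqrt (1 + x^2))], which makes them strict and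
   coercive: the difference with the solution then attains its extremum over [t >= 0], at a
   point with [t > 0] where the viscosity inequality gives a contradiction.

   Inviscid problem: by Bernoulli's inequality [F p >= p - (1 - 1/m)] on [(0, 1]], so a
   smoothing of [max (x - t + 1, 0) + (1 - 1/m) t] is a supersolution; at [(0, 1)] it is
   [1 - 1/m] up to the smoothing, whence [u (0, 1) <= 1 - 1/m].

   Viscous problem: as [F p <= p] on [[-1, 1]], the solution of the transported heat equation
   [v_t + v_x = eps v_xx] with datum [hat] is, up to a constant factor, a subsolution.  It is
   written in closed form with [gauss_int], started at time [tau0 > 0] to be smooth, and at
   [(0, 1)] (the foot of the transported hat) it is of order [sqrt eps]: explicit bounds on
   the exponential and on [gauss_int] give [ueps (0, 1) >= 2 c sqrt eps], with [c] the constant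
   of the statement, while [u (0, 1) <= 1 - 1/m <= c sqrt eps]. *)

From Stdlib Require Import Reals Lra Psatz Factorial ClassicalEpsilon.
From Coquelicot Require Import Coquelicot.
Open Scope R_scope.

Lemma nondecr_of_derive (f df : R -> R) a b : a <= b ->
  (forall x, a <= x <= b -> is_derive f x (df x)) ->
  (forall x, a <= x <= b -> 0 <= df x) -> f a <= f b.
Proof.
  intros Hab Hd Hpos.
  destruct (MVT_gen f a b df) as [c [Hc Hfc]];
    rewrite ?Rmin_left, ?Rmax_right in * by lra.
  - intros x Hx; apply Hd; lra.
  - intros x Hx; apply continuity_pt_filterlim, (ex_derive_continuous (V := R_NormedModule)).
    eexists; apply Hd; lra.
  - enough (0 <= df c * (b - a)) by lra.
    apply Rmult_le_pos; [apply Hpos|]; lra.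
Qed.

Lemma nonincr_of_derive (f df : R -> R) a b : a <= b ->
  (forall x, a <= x <= b -> is_derive f x (df x)) ->
  (forall x, a <= x <= b -> df x <= 0) -> f b <= f a.
Proof.
  intros Hab Hd Hneg.
  enough (- f a <= - f b) by lra.
  apply (nondecr_of_derive (fun x => - f x) (fun x => - df x) a b Hab).
  - intros x Hx; apply (is_derive_opp f x (df x)), Hd, Hx.
  - intros x Hx; specialize (Hneg x Hx); lra.
Qed.

Lemma exp_le_exp x y : x <= y -> exp x <= exp y.
Proof. intros [H|H]; [now apply Rlt_le, exp_increasing | subst; apply Rle_refl]. Qed.

Lemma is_derive_eq (f : R -> R) (x l1 l2 : R) : is_derive f x l1 -> l1 = l2 -> is_derive f x l2.
Proof. now intros H <-. Qed.

Definition exp_taylor (n : nat) (y : R) : R := sum_f_R0 (fun k => y ^ k / INR (fact k)) n.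

Lemma exp_taylor_S n y : exp_taylor (S n) y = exp_taylor n y + y ^ S n / INR (fact (S n)).
Proof. reflexivity. Qed.

Lemma exp_taylor_0 n : exp_taylor n 0 = 1.
Proof.
  induction n as [|n IH]; [unfold exp_taylor; simpl; field|].
  rewrite exp_taylor_S, IH; simpl; unfold Rdiv; ring.
Qed.

Lemma is_derive_exp_taylor n (y : R) : is_derive (exp_taylor (S n)) y (exp_taylor n y).
Proof.
  induction n as [|n IH].
  - unfold exp_taylor; simpl. auto_derive; auto. field.
  - apply is_derive_ext with (fun y => exp_taylor (S n) y + y ^ S (S n) / INR (fact (S (S n)))).
    { intros z; now rewrite (exp_taylor_S (S n)). }
    rewrite exp_taylor_S.
    apply (is_derive_plus (V := R_NormedModule)); [exact IH|].
    assert (Hk := is_derive_pow (fun y => y) (S (S n)) y 1 (is_derive_id y)).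
    apply (is_derive_scal_l (K := R_AbsRing)) with (k := / INR (fact (S (S n)))) in Hk.
    apply (is_derive_ext (fun z => scal (z ^ S (S n)) (/ INR (fact (S (S n)))))); [reflexivity|].
    eapply is_derive_eq; [apply Hk|].
    change (scal ?a ?b) with (a * b); simpl pred.
    rewrite (fact_simpl (S n)), mult_INR.
    pose proof (INR_fact_neq_0 (S n)).
    field; split; [exact H | apply not_0_INR; lia].
Qed.

Lemma exp_neg_taylor_sign n y : 0 <= y -> 0 <= (-1) ^ S n * (exp (-y) - exp_taylor n (-y)).
Proof.
  revert y; induction n as [|n IH]; intros y Hy.
  - unfold exp_taylor; simpl.
    assert (exp (-y) <= exp 0) by (apply exp_le_exp; lra). rewrite exp_0 in H. lra.
  - assert (Hd : forall z, is_derive (fun z => (-1) ^ S (S n) * (exp (-z) - exp_taylor (S n) (-z))) z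
                      ((-1) ^ S n * (exp (-z) - exp_taylor n (-z)))).
    { intros z.
      assert (HD : Derive (fun x => exp_taylor (S n) x) (- z) = exp_taylor n (- z))
        by apply is_derive_unique, is_derive_exp_taylor.
      auto_derive.
      - repeat split; auto. eexists; apply is_derive_exp_taylor.
      - rewrite HD. simpl; ring. }
    pose proof (nondecr_of_derive _ _ 0 y Hy (fun z _ => Hd z) (fun z Hz => IH z (proj1 Hz))) as H.
    cbv beta in H. rewrite Ropp_0, exp_0, exp_taylor_0, Rminus_diag, Rmult_0_r in H. exact H.
Qed.

Lemma exp_neg_le_taylor_even n y : 0 <= y -> exp (- y) <= exp_taylor (2 * n) (- y).
Proof. intros Hy; pose proof (exp_neg_taylor_sign (2 * n) y Hy); rewrite pow_1_odd in H; lra. Qed.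

Lemma exp_neg_ge_taylor_odd n y : 0 <= y -> exp_taylor (S (2 * n)) (- y) <= exp (- y).
Proof.
  intros Hy; pose proof (exp_neg_taylor_sign (S (2 * n)) y Hy).
  replace (S (S (2 * n))) with (2 * S n)%nat in H by lia; rewrite pow_1_even in H; lra.
Qed.

Lemma exp_neg_le_taylor2 y : 0 <= y -> exp (- y) <= 1 - y + y ^ 2 / 2.
Proof.
  intros Hy; apply (Rle_trans _ _ _ (exp_neg_le_taylor_even 1 y Hy)).
  unfold exp_taylor; simpl; lra.
Qed.

Lemma exp_neg_le_taylor4 y : 0 <= y -> exp (- y) <= 1 - y + y ^ 2 / 2 - y ^ 3 / 6 + y ^ 4 / 24.
Proof.
  intros Hy; apply (Rle_trans _ _ _ (exp_neg_le_taylor_even 2 y Hy)).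
  right; unfold exp_taylor; simpl; field.
Qed.

Lemma exp_neg_1_bounds : 0.36785 <= exp (-1) <= 0.36789.
Proof.
  assert (exp_taylor 7 (- 1) <= exp (- 1)) by exact (exp_neg_ge_taylor_odd 3 1 ltac:(lra)).
  assert (exp (- 1) <= exp_taylor 8 (- 1)) by exact (exp_neg_le_taylor_even 4 1 ltac:(lra)).
  unfold exp_taylor, sum_f_R0 in *; rewrite !fact_simpl, !mult_INR in *; simpl in *; lra.
Qed.

Lemma PI_ge_314 : 3.14 <= PI.
Proof.
  pose proof (PI_2_3_7_ineq 1) as [H _].
  unfold sum_f_R0, tg_alt, PI_2_3_7_tg, Ratan_seq in H; simpl in H; lra.
Qed.

(** * The Gaussian integral *)

Definition gauss_int (x : R) : R := RInt (fun u => exp (- (u * u))) 0 x.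

Lemma is_derive_gauss_int (x : R) : is_derive gauss_int x (exp (- (x * x))).
Proof.
  assert (Hc : forall z, continuous (fun u => exp (- (u * u))) z)
    by (intros z; apply continuity_pt_filterlim; reg).
  unfold gauss_int; apply (is_derive_RInt (fun u => exp (- (u * u))) _ 0 x); [|apply Hc].
  apply filter_forall; intros y; apply (RInt_correct (V := R_CompleteNormedModule)).
  apply (ex_RInt_continuous (V := R_CompleteNormedModule)); intros z _; apply Hc.
Qed.

Lemma ex_derive_gauss_int x : ex_derive gauss_int x.
Proof. eexists; apply is_derive_gauss_int. Qed.

#[local] Hint Resolve ex_derive_gauss_int : core.

Lemma Derive_gauss_int x : Derive (fun y => gauss_int y) x = exp (- (x * x)).
Proof. apply is_derive_unique, is_derive_gauss_int. Qed.

Lemma continuity_gauss_int x : continuity_pt gauss_int x.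
Proof.
  apply continuity_pt_filterlim, (ex_derive_continuous (V := R_NormedModule)), ex_derive_gauss_int.
Qed.

Lemma gauss_int_0 : gauss_int 0 = 0.
Proof. apply (RInt_point (V := R_CompleteNormedModule)). Qed.

Lemma gauss_int_le a b : a <= b -> gauss_int a <= gauss_int b.
Proof.
  intros Hab; apply (nondecr_of_derive _ _ a b Hab (fun x _ => is_derive_gauss_int x)).
  intros x _; apply Rlt_le, exp_pos.
Qed.

Lemma gauss_int_opp x : gauss_int (- x) = - gauss_int x.
Proof.
  set (h := fun y => gauss_int y + gauss_int (- y)).
  assert (Hh : forall y, is_derive h y 0).
  { intros y; unfold h; auto_derive; [repeat split; auto|].
    rewrite !Derive_gauss_int; replace (- y * - y) with (y * y) by ring; ring. }
  destruct (MVT_gen h 0 x (fun _ => 0)) as [c [_ Hc]].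
  - intros y _; apply Hh.
  - intros y _; apply continuity_pt_filterlim, (ex_derive_continuous (V := R_NormedModule)).
    eexists; apply Hh.
  - unfold h in Hc; rewrite Ropp_0, gauss_int_0 in Hc; lra.
Qed.

Lemma gauss_int_1_le : gauss_int 1 <= 1 - 1/3 + 1/10 - 1/42 + 1/216.
Proof.
  set (p := fun x => x - x ^ 3 / 3 + x ^ 5 / 10 - x ^ 7 / 42 + x ^ 9 / 216).
  assert (H : p 0 - gauss_int 0 <= p 1 - gauss_int 1).
  { apply (nondecr_of_derive (fun x => p x - gauss_int x)
      (fun x => (1 - x ^ 2 + x ^ 4 / 2 - x ^ 6 / 6 + x ^ 8 / 24) - exp (- (x * x)))); [lra| |].
    - intros x _; unfold p; auto_derive; auto. rewrite Derive_gauss_int; field.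
    - intros x _; pose proof (exp_neg_le_taylor4 (x * x) ltac:(nra)).
      enough ((x * x) ^ 2 = x ^ 4 /\ (x * x) ^ 3 = x ^ 6 /\ (x * x) ^ 4 = x ^ 8) by lra.
      repeat split; ring. }
  unfold p in H; rewrite gauss_int_0 in H; lra.
Qed.

Lemma gauss_int_tail x : 1 <= x -> gauss_int x <= gauss_int 1 + exp (-1) / 2.
Proof.
  intros Hx.
  assert (H : gauss_int x + exp (- (x * x)) / 2 <= gauss_int 1 + exp (- (1 * 1)) / 2).
  { apply (nonincr_of_derive (fun x => gauss_int x + exp (- (x * x)) / 2)
      (fun x => exp (- (x * x)) * (1 - x))); [lra| |].
    - intros y _; auto_derive; auto. rewrite Derive_gauss_int; field.
    - intros y Hy; pose proof (exp_pos (- (y * y))); nra. }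
  replace (- (1 * 1)) with (-1) in H by ring; pose proof (exp_pos (- (x * x))); lra.
Qed.

(* A rational upper bound for [sup gauss_int = sqrt PI / 2]. *)
Definition gauss_int_ub : R := 0.9315.

Lemma Rabs_gauss_int_le x : Rabs (gauss_int x) <= gauss_int_ub.
Proof.
  assert (Hub : forall x, gauss_int x <= gauss_int_ub).
  { intros y; pose proof gauss_int_1_le; pose proof exp_neg_1_bounds; unfold gauss_int_ub.
    destruct (Rle_dec 1 y); [pose proof (gauss_int_tail y r); lra|].
    pose proof (gauss_int_le y 1 ltac:(lra)); pose proof (gauss_int_le 0 1 ltac:(lra)).
    rewrite gauss_int_0 in *; lra. }
  apply Rabs_le; split; [|apply Hub].
  pose proof (Hub (- x)); rewrite gauss_int_opp in H; lra.
Qed.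

(** * Heat evolution of the hat *)

Definition gauss_int2 (z : R) : R := z * gauss_int z + exp (- (z * z)) / 2.
Definition heat_abs (s w : R) : R := s * gauss_int2 (w / s).
(* For [s = 2 sqrt (eps t)], [heat_hat s y / sqrt PI] solves [v_t = eps v_yy] with
   initial datum [hat], because [heat_abs s w] tends to [sqrt PI / 2 * Rabs w] as [s -> 0]. *)
Definition heat_hat (s y : R) : R := heat_abs s (y + 1) - 2 * heat_abs s y + heat_abs s (y - 1).
Definition heat_hat_dy (s y : R) : R :=
  gauss_int ((y + 1) / s) - 2 * gauss_int (y / s) + gauss_int ((y - 1) / s).
Definition heat_hat_dyy (s y : R) : R :=
  (exp (- (((y + 1) / s) * ((y + 1) / s))) - 2 * exp (- ((y / s) * (y / s)))
   + exp (- (((y - 1) / s) * ((y - 1) / s)))) / s.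

Lemma is_derive_gauss_int2 (z : R) : is_derive gauss_int2 z (gauss_int z).
Proof. unfold gauss_int2; auto_derive; auto. rewrite Derive_gauss_int; field. Qed.

Lemma ex_derive_gauss_int2 z : ex_derive gauss_int2 z.
Proof. eexists; apply is_derive_gauss_int2. Qed.

#[local] Hint Resolve ex_derive_gauss_int2 : core.

Lemma continuity_gauss_int2 z : continuity_pt gauss_int2 z.
Proof.
  apply continuity_pt_filterlim, (ex_derive_continuous (V := R_NormedModule)), ex_derive_gauss_int2.
Qed.

Lemma Derive_gauss_int2 z : Derive (fun y => gauss_int2 y) z = gauss_int z.
Proof. apply is_derive_unique, is_derive_gauss_int2. Qed.

Lemma gauss_int2_0 : gauss_int2 0 = 1 / 2.
Proof. unfold gauss_int2; rewrite gauss_int_0, Rmult_0_r, Ropp_0, exp_0; field. Qed.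

Lemma gauss_int2_opp z : gauss_int2 (- z) = gauss_int2 z.
Proof. unfold gauss_int2; rewrite gauss_int_opp; replace (- z * - z) with (z * z) by ring; ring. Qed.

Lemma heat_hat_opp s y : heat_hat s (- y) = heat_hat s y.
Proof.
  assert (Habs : forall w, heat_abs s (- w) = heat_abs s w).
  { intros w; unfold heat_abs; replace (- w / s) with (- (w / s)) by (unfold Rdiv; ring).
    now rewrite gauss_int2_opp. }
  unfold heat_hat; replace (- y + 1) with (- (y - 1)) by ring;
    replace (- y - 1) with (- (y + 1)) by ring; rewrite !Habs; ring.
Qed.

Lemma is_derive_heat_hat (s y : R) : 0 < s -> is_derive (heat_hat s) y (heat_hat_dy s y).
Proof.
  intros Hs; unfold heat_hat, heat_abs, heat_hat_dy; auto_derive; [repeat split; auto|].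
  rewrite !Derive_gauss_int2; unfold Rdiv, Rminus; field; lra.
Qed.

Lemma Rabs_heat_hat_dy_le s y : 0 < s -> Rabs (heat_hat_dy s y) <= 2 * gauss_int_ub.
Proof.
  intros Hs; unfold heat_hat_dy.
  assert (Hle : forall a b, a <= b -> a / s <= b / s)
    by (intros a b Hab; apply Rmult_le_compat_r; [apply Rlt_le, Rinv_0_lt_compat|]; lra).
  pose proof (gauss_int_le _ _ (Hle y (y + 1) ltac:(lra))).
  pose proof (gauss_int_le _ _ (Hle (y - 1) y ltac:(lra))).
  pose proof (Rabs_gauss_int_le ((y + 1) / s)); pose proof (Rabs_gauss_int_le ((y - 1) / s)).
  apply Rabs_le_between in H1; apply Rabs_le_between in H2; apply Rabs_le; lra.
Qed.

(* For [x, z >= 0], [exp (- (x + z)^2) <= exp (- (x - z)^2)], so [z |-> gauss_int (x + z) +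
   gauss_int (x - z)] is nonincreasing on [z >= 0]. *)
Lemma heat_hat_dy_nonpos s y : 0 < s -> 0 <= y -> heat_hat_dy s y <= 0.
Proof.
  intros Hs Hy.
  set (x := y / s); set (h := 1 / s).
  assert (Hx : 0 <= x) by (unfold x; apply Rmult_le_pos; [|apply Rlt_le, Rinv_0_lt_compat]; lra).
  assert (Hh : 0 <= h) by (unfold h; apply Rmult_le_pos; [|apply Rlt_le, Rinv_0_lt_compat]; lra).
  unfold heat_hat_dy; replace ((y + 1) / s) with (x + h) by (unfold x, h; field; lra);
    replace ((y - 1) / s) with (x - h) by (unfold x, h; field; lra); fold x.
  assert (H := nonincr_of_derive (fun z => gauss_int (x + z) + gauss_int (x - z))
     (fun z => exp (- ((x + z) * (x + z))) - exp (- ((x - z) * (x - z)))) 0 h Hh).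
  cbv beta in H; rewrite Rplus_0_r, Rminus_0_r in H.
  enough (gauss_int (x + h) + gauss_int (x - h) <= gauss_int x + gauss_int x) by lra.
  apply H.
  - intros z _; auto_derive; [repeat split; auto|]. rewrite !Derive_gauss_int; unfold Rminus; ring.
  - intros z Hz; enough (exp (- ((x + z) * (x + z))) <= exp (- ((x - z) * (x - z)))) by lra.
    apply exp_le_exp; nra.
Qed.

Lemma heat_hat_nonincr s a b : 0 < s -> 0 <= a <= b -> heat_hat s b <= heat_hat s a.
Proof.
  intros Hs Hab; apply (nonincr_of_derive (heat_hat s) (heat_hat_dy s) a b); [lra| |].
  - intros; now apply is_derive_heat_hat.
  - intros; apply heat_hat_dy_nonpos; lra.
Qed.

Lemma gauss_int2_le z : 0 <= z -> gauss_int2 z <= 1 / 2 + gauss_int_ub * z.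
Proof.
  intros Hz; rewrite <- gauss_int2_0.
  enough (gauss_int_ub * 0 - gauss_int2 0 <= gauss_int_ub * z - gauss_int2 z) by lra.
  apply (nondecr_of_derive (fun z => gauss_int_ub * z - gauss_int2 z)
    (fun z => gauss_int_ub - gauss_int z) 0 z Hz).
  - intros y _; auto_derive; auto. rewrite Derive_gauss_int2; ring.
  - intros y _; pose proof (Rabs_gauss_int_le y) as Hy; apply Rabs_le_between in Hy; lra.
Qed.

Lemma heat_hat_0_le s : 0 < s -> heat_hat s 0 <= 2 * gauss_int_ub.
Proof.
  intros Hs; unfold heat_hat, heat_abs; rewrite Rplus_0_l, Rminus_0_l, Rdiv_0_l.
  replace (- (1) / s) with (- (1 / s)) by (field; lra); rewrite gauss_int2_opp, gauss_int2_0.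
  pose proof (gauss_int2_le (1 / s) ltac:(apply Rlt_le, Rdiv_lt_0_compat; lra)) as Hlin.
  apply (Rmult_le_compat_l s) in Hlin; [|lra].
  replace (s * (1 / 2 + gauss_int_ub * (1 / s))) with (s / 2 + gauss_int_ub) in Hlin by (field; lra).
  lra.
Qed.

Lemma heat_hat_le s y : 0 < s -> heat_hat s y <= 2 * gauss_int_ub.
Proof.
  intros Hs; pose proof (heat_hat_0_le s Hs); destruct (Rle_dec 0 y).
  - pose proof (heat_hat_nonincr s 0 y Hs ltac:(lra)); lra.
  - rewrite <- heat_hat_opp; pose proof (heat_hat_nonincr s 0 (- y) Hs ltac:(lra)); lra.
Qed.

Lemma heat_hat_1 s : 0 < s -> heat_hat s 1 =
  2 * (gauss_int (2 / s) - gauss_int (1 / s)) +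
  s / 2 * (1 - 2 * exp (- ((1 / s) * (1 / s))) + exp (- ((2 / s) * (2 / s)))).
Proof.
  intros Hs; unfold heat_hat, heat_abs, gauss_int2.
  replace (1 + 1) with 2 by ring; rewrite Rminus_diag, Rdiv_0_l, gauss_int_0, Rmult_0_r, Ropp_0, exp_0.
  field; lra.
Qed.

Lemma heat_hat_1_le s : 0 < s -> heat_hat s 1 <= s / 2.
Proof.
  intros Hs; rewrite (heat_hat_1 s Hs).
  set (h := 1 / s); assert (Hh : 0 < h) by (unfold h; apply Rdiv_lt_0_compat; lra).
  replace (2 / s) with (2 * h) by (unfold h; field; lra).
  (* on [h, 2h], [exp (- z^2) <= (z / h) exp (- z^2)], whose antiderivative is explicit *)
  assert (H : - exp (- (h * h)) / (2 * h) - gauss_int h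
              <= - exp (- (2 * h * (2 * h))) / (2 * h) - gauss_int (2 * h)).
  { apply (nondecr_of_derive (fun z => - exp (- (z * z)) / (2 * h) - gauss_int z)
      (fun z => (z / h - 1) * exp (- (z * z))) h (2 * h)); [lra| |].
    - intros z _; auto_derive; [repeat split; auto; lra|]. rewrite Derive_gauss_int; field; lra.
    - intros z Hz; apply Rmult_le_pos; [|apply Rlt_le, exp_pos].
      enough (1 <= z / h) by lra.
      apply (Rmult_le_reg_r h); [lra|]; unfold Rdiv; rewrite Rmult_assoc, Rinv_l; lra. }
  assert (Hk : forall c, - c / (2 * h) = - (s / 2) * c) by (intros; unfold h; field; lra).
  rewrite !Hk in H; pose proof (exp_pos (- (2 * h * (2 * h)))); nra.
Qed.

Definition heat_hat_1_lb (X : R) : R :=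
  1 + 2 * exp (- (4 * X)) - (exp (- X) - exp (- (4 * X))) / X.

Lemma heat_hat_1_ge s : 0 < s -> s / 2 * heat_hat_1_lb (1 / (s * s)) <= heat_hat s 1.
Proof.
  intros Hs; rewrite (heat_hat_1 s Hs).
  set (h := 1 / s); assert (Hh : 0 < h) by (unfold h; apply Rdiv_lt_0_compat; lra).
  replace (2 / s) with (2 * h) by (unfold h; field; lra).
  (* [exp (- z^2) >= (3 r - r^3) / 2 * exp (- z^2)] with [r = z / h] (tangent at [r = 1]),
     and the right-hand side has the explicit antiderivative [P] *)
  set (P := fun z => - (3 / (4 * h)) * exp (- (z * z)) + (z * z + 1) * exp (- (z * z)) / (4 * h * h * h)).
  assert (HP : gauss_int h - P h <= gauss_int (2 * h) - P (2 * h)).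
  { apply (nondecr_of_derive (fun z => gauss_int z - P z)
      (fun z => exp (- (z * z)) * ((z / h - 1) ^ 2 * (z / h + 2) / 2)) h (2 * h)); [lra| |].
    - intros z _; unfold P; auto_derive; [repeat split; auto; lra|].
      rewrite Derive_gauss_int; field; lra.
    - intros z Hz; apply Rmult_le_pos; [apply Rlt_le, exp_pos|].
      assert (0 <= z / h) by (apply Rmult_le_pos; [|apply Rlt_le, Rinv_0_lt_compat]; lra).
      pose proof (pow2_ge_0 (z / h - 1)); nra. }
  unfold P in HP; unfold heat_hat_1_lb.
  replace (s / 2) with (1 / (2 * h)) by (unfold h; field; lra).
  replace (1 / (s * s)) with (h * h) by (unfold h; field; lra).
  replace (exp (- (4 * (h * h)))) with (exp (- (2 * h * (2 * h)))) by (f_equal; ring).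
  enough (E : 1 / (2 * h) * (1 + 2 * exp (- (2 * h * (2 * h)))
                 - (exp (- (h * h)) - exp (- (2 * h * (2 * h)))) / (h * h))
    = 2 * ((- (3 / (4 * h)) * exp (- (2 * h * (2 * h)))
            + (2 * h * (2 * h) + 1) * exp (- (2 * h * (2 * h))) / (4 * h * h * h))
           - (- (3 / (4 * h)) * exp (- (h * h)) + (h * h + 1) * exp (- (h * h)) / (4 * h * h * h)))
      + 1 / (2 * h) * (1 - 2 * exp (- (h * h)) + exp (- (2 * h * (2 * h))))) by lra.
  field; lra.
Qed.

Lemma heat_hat_le_hat s y : 0 < s -> heat_hat s y <= 2 * gauss_int_ub * hat y + heat_hat s 1.
Proof.
  intros Hs.
  assert (Hpos : forall y, 0 <= y -> heat_hat s y <= 2 * gauss_int_ub * Rmax (1 - y) 0 + heat_hat s 1).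
  { intros z Hz; destruct (Rle_dec 1 z).
    - rewrite Rmax_right by lra; pose proof (heat_hat_nonincr s 1 z Hs ltac:(lra)); lra.
    - rewrite Rmax_left by lra.
      enough (2 * gauss_int_ub * z + heat_hat s z <= 2 * gauss_int_ub * 1 + heat_hat s 1) by lra.
      apply (nondecr_of_derive (fun y => 2 * gauss_int_ub * y + heat_hat s y)
        (fun y => 2 * gauss_int_ub + heat_hat_dy s y) z 1); [lra| |].
      + intros x _; apply (is_derive_plus (V := R_NormedModule) (fun y => 2 * gauss_int_ub * y)).
        * auto_derive; auto; ring.
        * now apply is_derive_heat_hat.
      + intros x _; pose proof (Rabs_heat_hat_dy_le s x Hs) as Hx; apply Rabs_le_between in Hx; lra. }
  unfold hat; destruct (Rle_dec 0 y).
  - rewrite Rabs_right by lra; now apply Hpos.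
  - rewrite Rabs_left, <- heat_hat_opp by lra; apply Hpos; lra.
Qed.

Lemma heat_hat_1_lb_eq X : 0 < X ->
  heat_hat_1_lb X = 1 - exp (- X) / X + exp (- (4 * X)) * (2 + 1 / X).
Proof. intros HX; unfold heat_hat_1_lb; field; lra. Qed.

Lemma exp_neg_div_le a X : 0 < a <= X -> exp (- X) / X <= exp (- a) / a.
Proof.
  intros Ha; apply Rmult_le_compat; [apply Rlt_le, exp_pos | apply Rlt_le, Rinv_0_lt_compat; lra | |].
  - apply exp_le_exp; lra.
  - apply Rinv_le_contravar; lra.
Qed.

Lemma heat_hat_1_lb_ge_between a b X : 0 < a <= X -> X <= b ->
  1 - exp (- a) / a + exp (- (4 * b)) * (2 + 1 / b) <= heat_hat_1_lb X.
Proof.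
  intros Ha Hb; rewrite heat_hat_1_lb_eq by lra; pose proof (exp_neg_div_le a X Ha).
  enough (exp (- (4 * b)) * (2 + 1 / b) <= exp (- (4 * X)) * (2 + 1 / X)) by lra.
  apply Rmult_le_compat; [apply Rlt_le, exp_pos | | |].
  - enough (0 < 1 / b) by lra. apply Rdiv_lt_0_compat; lra.
  - apply exp_le_exp; lra.
  - enough (1 / b <= 1 / X) by lra. unfold Rdiv; rewrite !Rmult_1_l; apply Rinv_le_contravar; lra.
Qed.

Lemma exp_neg_1_add_bounds d : 0 <= d ->
  exp (-1) * (1 - d) <= exp (- (1 + d)) <= exp (-1) * (1 - d + d ^ 2 / 2).
Proof.
  intros Hd; replace (exp (- (1 + d))) with (exp (-1) * exp (- d))
    by (rewrite <- exp_plus; f_equal; ring).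
  pose proof exp_neg_1_bounds; pose proof (exp_ineq1_le (- d)); pose proof (exp_neg_le_taylor2 d Hd).
  split; apply Rmult_le_compat_l; lra.
Qed.

Lemma exp_neg_1_sub_le d : 0 <= d < 1 -> exp (- (1 - d)) <= exp (-1) / (1 - d).
Proof.
  intros Hd; replace (exp (- (1 - d))) with (exp (-1) / exp (- d))
    by (unfold Rdiv; rewrite <- exp_Ropp, <- exp_plus; f_equal; ring).
  pose proof (exp_ineq1_le (- d)); pose proof (exp_pos (-1)).
  unfold Rdiv; apply Rmult_le_compat_l; [lra|]; apply Rinv_le_contravar; lra.
Qed.

Lemma heat_hat_1_lb_ge X : 0.999999 <= X -> 0.68 <= heat_hat_1_lb X.
Proof.
  intros HX; pose proof exp_neg_1_bounds.
  assert (Hpow : forall b, exp (- (4 * b)) = exp (- b) ^ 4)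
    by (intros; simpl; rewrite Rmult_1_r, <- !exp_plus; f_equal; ring).
  destruct (Rle_dec X 1.02) as [HA|HA]; [|destruct (Rle_dec X 1.1) as [HB|HB]].
  - pose proof (heat_hat_1_lb_ge_between 0.999999 1.02 X ltac:(lra) HA).
    pose proof (exp_neg_1_sub_le 0.000001 ltac:(lra)).
    pose proof (proj1 (exp_neg_1_add_bounds 0.02 ltac:(lra))).
    replace (1 - 0.000001) with 0.999999 in * by lra; replace (1 + 0.02) with 1.02 in * by lra.
    assert (0.36 ^ 4 <= exp (- (4 * 1.02))) by (rewrite Hpow; apply pow_incr; lra).
    assert (exp (- (0.999999)) / 0.999999 <= 0.36791) by (unfold Rdiv in *; lra).
    assert (0.05 <= exp (- (4 * 1.02)) * (2 + 1 / 1.02)) by nra.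
    lra.
  - pose proof (heat_hat_1_lb_ge_between 1.02 1.1 X ltac:(lra) HB).
    pose proof (proj2 (exp_neg_1_add_bounds 0.02 ltac:(lra))).
    pose proof (proj1 (exp_neg_1_add_bounds 0.1 ltac:(lra))).
    replace (1 + 0.02) with 1.02 in * by lra; replace (1 + 0.1) with 1.1 in * by lra.
    assert (0.331 ^ 4 <= exp (- (4 * 1.1))) by (rewrite Hpow; apply pow_incr; lra).
    assert (exp (- (1.02)) / 1.02 <= 0.3537) by (unfold Rdiv; lra).
    assert (0.0349 <= exp (- (4 * 1.1)) * (2 + 1 / 1.1)) by nra.
    lra.
  - rewrite heat_hat_1_lb_eq by lra.
    pose proof (exp_neg_div_le 1.1 X ltac:(lra)).
    pose proof (proj2 (exp_neg_1_add_bounds 0.1 ltac:(lra))).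
    replace (1 + 0.1) with 1.1 in * by lra.
    assert (0 <= exp (- (4 * X)) * (2 + 1 / X)).
    { apply Rmult_le_pos; [apply Rlt_le, exp_pos|].
      enough (0 < 1 / X) by lra. apply Rdiv_lt_0_compat; lra. }
    assert (exp (- (1.1)) / 1.1 <= 0.31) by (unfold Rdiv; lra).
    lra.
Qed.

(** * Minima and comparison principles *)

Lemma continuity_pt_eps (h : R -> R) t : continuity_pt h t <->
  forall eps, 0 < eps -> exists d, 0 < d /\ forall s, Rabs (s - t) < d -> Rabs (h s - h t) < eps.
Proof.
  unfold continuity_pt, continue_in, limit1_in, limit_in; simpl; unfold R_dist; split.
  - intros H eps Heps; destruct (H eps Heps) as [d [Hd Hs]]; exists d; split; auto.
    intros s Hst; destruct (Req_dec s t) as [->|Hne].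
    + rewrite Rminus_diag, Rabs_R0; lra.
    + apply Hs; repeat split; auto.
  - intros H eps Heps; destruct (H eps Heps) as [d [Hd Hs]]; exists d; split; auto.
    intros s [_ Hst]; auto.
Qed.

Lemma continuity_2d_pt_slice_t f x t : continuity_2d_pt f x t -> continuity_pt (fun s => f x s) t.
Proof.
  intros H; apply continuity_pt_eps; intros eps Heps.
  destruct (H (mkposreal eps Heps)) as [d Hd]; exists d; split; [apply cond_pos|].
  intros s Hs; apply Hd; auto. rewrite Rminus_diag, Rabs_R0; apply cond_pos.
Qed.

Lemma continuity_2d_pt_comp_t (g : R -> R -> R) (sg : R -> R) x t :
  continuity_2d_pt g x (sg t) -> continuity_pt sg t ->
  continuity_2d_pt (fun u v => g u (sg v)) x t.
Proof.
  intros Hg Hs eps; destruct (Hg eps) as [d1 Hd1].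
  destruct (proj1 (continuity_pt_eps sg t) Hs d1 (cond_pos d1)) as [d2 [Hd2 Hs2]].
  assert (Hd : 0 < Rmin d1 d2) by (apply Rmin_pos; [apply cond_pos|lra]).
  exists (mkposreal _ Hd); simpl; intros u v Hu Hv.
  apply Hd1; [|apply Hs2]; eapply Rlt_le_trans; eauto; [apply Rmin_l | apply Rmin_r].
Qed.

Definition clamp (a b x : R) : R := Rmax a (Rmin b x).

Lemma clamp_in a b x : a <= b -> a <= clamp a b x <= b.
Proof. intros H; unfold clamp, Rmax, Rmin; repeat destruct Rle_dec; lra. Qed.

Lemma clamp_id a b x : a <= x <= b -> clamp a b x = x.
Proof. intros H; unfold clamp; rewrite Rmin_right, Rmax_right; lra. Qed.

Lemma Rabs_clamp_sub_le a b x y : a <= b -> Rabs (clamp a b x - clamp a b y) <= Rabs (x - y).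
Proof. intros H; unfold clamp, Rmax, Rmin, Rabs; repeat destruct Rle_dec; repeat destruct Rcase_abs; lra. Qed.

(* Choose a minimiser in [t] for every [x] (clamped into [[a, b]]), then minimise the partial
   minimum in [x]; it is continuous by uniform continuity on the rectangle. *)
Lemma exists_min_rect (f : R -> R -> R) a b c d : a <= b -> c <= d ->
  (forall x t, a <= x <= b -> c <= t <= d -> continuity_2d_pt f x t) ->
  exists x0 t0, a <= x0 <= b /\ c <= t0 <= d /\
    forall x t, a <= x <= b -> c <= t <= d -> f x0 t0 <= f x t.
Proof.
  intros Hab Hcd Hf.
  set (P := fun x t => c <= t <= d /\ forall t', c <= t' <= d -> f (clamp a b x) t <= f (clamp a b x) t').
  assert (HP : forall x, exists t, P x t).
  { intros x; destruct (continuity_ab_min (fun t => f (clamp a b x) t) c d Hcd) as [m [Hm1 Hm2]].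
    - intros t Ht; apply continuity_2d_pt_slice_t, Hf; auto; apply clamp_in; auto.
    - exists m; split; auto. }
  set (ts := fun x => proj1_sig (constructive_indefinite_description _ (HP x))).
  assert (Hts : forall x, P x (ts x))
    by (intros x; unfold ts; destruct constructive_indefinite_description; auto).
  set (g := fun x => f (clamp a b x) (ts x)).
  assert (Hg : forall x, continuity_pt g x).
  { intros x; apply continuity_pt_eps; intros eps Heps.
    destruct (uniform_continuity_2d f a b c d Hf (mkposreal (eps / 2) ltac:(lra))) as [del Hdel].
    exists del; split; [apply cond_pos|]; intros s Hs.
    pose proof (Rabs_clamp_sub_le a b s x Hab).
    pose proof (clamp_in a b s Hab); pose proof (clamp_in a b x Hab).
    destruct (Hts s) as [Hs1 Hs2], (Hts x) as [Hx1 Hx2].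
    assert (Hdel0 : Rabs (ts x - ts x) < del) by (rewrite Rminus_diag, Rabs_R0; apply cond_pos).
    assert (Hdel1 : Rabs (ts s - ts s) < del) by (rewrite Rminus_diag, Rabs_R0; apply cond_pos).
    assert (A1 : Rabs (f (clamp a b s) (ts x) - f (clamp a b x) (ts x)) < eps / 2)
      by (apply Hdel; auto; lra).
    assert (A2 : Rabs (f (clamp a b x) (ts s) - f (clamp a b s) (ts s)) < eps / 2)
      by (apply Hdel; auto; rewrite Rabs_minus_sym; lra).
    specialize (Hs2 (ts x) Hx1); specialize (Hx2 (ts s) Hs1).
    apply Rabs_lt_between in A1; apply Rabs_lt_between in A2.
    unfold g; apply Rabs_lt_between; lra. }
  destruct (continuity_ab_min g a b Hab (fun x _ => Hg x)) as [x0 [Hx0 Hx0b]].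
  exists x0, (ts x0); destruct (Hts x0) as [Ht1 Ht2]; rewrite clamp_id in Ht2 by auto.
  repeat split; auto; try lra.
  intros x t Hx Ht; specialize (Hx0 x Hx); unfold g in Hx0; rewrite !clamp_id in Hx0 by auto.
  destruct (Hts x) as [_ Hx2]; rewrite clamp_id in Hx2 by auto; specialize (Hx2 t Ht); lra.
Qed.

Lemma exists_min_halfplane (f : R -> R -> R) :
  (forall x t, continuity_2d_pt f x t) ->
  (exists C al, 0 < al /\ forall x t, 0 <= t -> C + al * (Rabs x + t) <= f x t) ->
  exists x0 t0, 0 <= t0 /\ forall x t, 0 <= t -> f x0 t0 <= f x t.
Proof.
  intros Hf [C [al [Hal Hco]]].
  set (W := Rabs (f 0 0 - C) / al).
  assert (HW0 : 0 <= W) by (apply Rmult_le_pos; [apply Rabs_pos | apply Rlt_le, Rinv_0_lt_compat; lra]).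
  assert (HW : forall x t, 0 <= t -> f x t <= f 0 0 -> Rabs x <= W /\ t <= W).
  { intros x t Ht Hle; specialize (Hco x t Ht).
    assert (Rabs x + t <= W).
    { apply (Rmult_le_reg_l al); [lra|]; unfold W.
      replace (al * (Rabs (f 0 0 - C) / al)) with (Rabs (f 0 0 - C)) by (field; lra).
      pose proof (Rle_abs (f 0 0 - C)); lra. }
    pose proof (Rabs_pos x); lra. }
  destruct (exists_min_rect f (- W) W 0 W ltac:(lra) HW0 (fun x t _ _ => Hf x t))
    as [x0 [t0 [Hx0 [Ht0 Hmin]]]].
  assert (Hle : f x0 t0 <= f 0 0) by (apply Hmin; lra).
  exists x0, t0; split; [lra|]; intros x t Ht.
  destruct (Rle_dec (f x t) (f 0 0)) as [Hxt|]; [|lra].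
  destruct (HW x t Ht Hxt) as [Hx HtW]; apply Rabs_le_between in Hx; apply Hmin; lra.
Qed.

Lemma BUC_continuity_2d_pt U : BUC U -> forall x t, continuity_2d_pt (fun x t => U x (Rmax t 0)) x t.
Proof.
  intros [_ HU] x t eps; destruct (HU eps (cond_pos eps)) as [d [Hd H]].
  exists (mkposreal d Hd); simpl; intros u v Hu Hv.
  apply H; try apply Rmax_r; auto.
  eapply Rle_lt_trans; [|apply Hv]; unfold Rmax, Rabs; repeat destruct Rle_dec; repeat destruct Rcase_abs; lra.
Qed.

Lemma BUC_opp U : BUC U -> BUC (fun x t => - U x t).
Proof.
  intros [[M HM] HU]; split.
  - exists M; intros x t Ht; rewrite Rabs_Ropp; auto.
  - intros e He; destruct (HU e He) as [d [Hd H]]; exists d; split; auto.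
    intros; replace (- U x t - - U y s) with (- (U x t - U y s)) by ring; rewrite Rabs_Ropp; auto.
Qed.

Lemma exists_interior_min (g : R -> R) (U Phi : R -> R -> R) x1 t1 :
  BUC U -> (forall x, U x 0 = g x) -> (forall x, Phi x 0 <= g x) ->
  (forall x t, continuity_2d_pt Phi x t) ->
  (exists C al, 0 < al /\ forall x t, 0 <= t -> Phi x t <= C - al * (Rabs x + t)) ->
  0 <= t1 -> U x1 t1 < Phi x1 t1 ->
  exists x0 t0, 0 < t0 /\ forall x t, 0 <= t -> U x0 t0 - Phi x0 t0 <= U x t - Phi x t.
Proof.
  intros HU HU0 HPhi0 HPhi [C [al [Hal Hco]]] Ht1 Hcross.
  set (f := fun x t => U x (Rmax t 0) - Phi x t).
  assert (Hf : forall x t, 0 <= t -> f x t = U x t - Phi x t)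
    by (intros; unfold f; rewrite Rmax_left; lra).
  pose proof HU as [[M HM] _].
  destruct (exists_min_halfplane f) as [x0 [t0 [Ht0 Hmin]]].
  - intros x t; apply continuity_2d_pt_minus; [apply BUC_continuity_2d_pt|]; auto.
  - exists (- M - C), al; split; auto; intros x t Ht; rewrite Hf by auto.
    specialize (HM x t Ht); apply Rabs_le_between in HM; specialize (Hco x t Ht); lra.
  - exists x0, t0; split.
    + destruct Ht0 as [|<-]; auto; exfalso.
      specialize (Hmin x1 t1 Ht1); rewrite !Hf, HU0 in * by lra.
      specialize (HPhi0 x0); lra.
    + intros x t Ht; rewrite <- !Hf by auto; auto.
Qed.

Lemma parabolic_comparison eps F g U Phi :
  visc_sol_parabolic eps F g U -> BUC U -> C21_test Phi ->
  (forall x, Phi x 0 <= g x) ->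
  (exists C al, 0 < al /\ forall x t, 0 <= t -> Phi x t <= C - al * (Rabs x + t)) ->
  (forall x t, 0 < t -> dt Phi x t + F (dx Phi x t) - eps * dxx Phi x t < 0) ->
  forall x t, 0 <= t -> Phi x t <= U x t.
Proof.
  intros [[_ [HU0 _]] [_ Hsuper]] HU HPhi HPhi0 Hco Hsub x1 t1 Ht1.
  destruct (Rle_dec (Phi x1 t1) (U x1 t1)) as [|Hcross]; auto; exfalso.
  destruct (exists_interior_min g U Phi x1 t1 HU HU0 HPhi0) as [x0 [t0 [Ht0 Hmin]]]; auto; try lra.
  { intros x t; apply (proj1 HPhi x t). }
  assert (Hloc : loc_min U Phi x0 t0).
  { exists 1; split; [lra|]; intros x t Ht _ _; apply Hmin; lra. }
  specialize (Hsuper Phi x0 t0 HPhi Ht0 Hloc); specialize (Hsub x0 t0 Ht0); lra.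
Qed.

Lemma HJ_comparison F g U Phi :
  visc_sol_HJ F g U -> BUC U -> C1_test Phi ->
  (forall x, g x <= Phi x 0) ->
  (exists C al, 0 < al /\ forall x t, 0 <= t -> C + al * (Rabs x + t) <= Phi x t) ->
  (forall x t, 0 < t -> dt Phi x t + F (dx Phi x t) > 0) ->
  forall x t, 0 <= t -> U x t <= Phi x t.
Proof.
  intros [[_ [HU0 _]] [Hsub _]] HU HPhi HPhi0 [C [al [Hal Hco]]] Hsuper x1 t1 Ht1.
  destruct (Rle_dec (U x1 t1) (Phi x1 t1)) as [|Hcross]; auto; exfalso.
  destruct (exists_interior_min (fun x => - g x) (fun x t => - U x t) (fun x t => - Phi x t) x1 t1)
    as [x0 [t0 [Ht0 Hmin]]]; try lra.
  - now apply BUC_opp.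
  - intros x; now rewrite HU0.
  - intros x; specialize (HPhi0 x); lra.
  - intros x t; apply continuity_2d_pt_opp, (proj1 (proj2 (proj2 (HPhi x t)))).
  - exists (- C), al; split; auto; intros x t Ht; specialize (Hco x t Ht); lra.
  - assert (Hloc : loc_max U Phi x0 t0).
    { exists 1; split; [lra|]; intros x t Ht _ _; specialize (Hmin x t (Rlt_le _ _ Ht)); lra. }
    specialize (Hsub Phi x0 t0 HPhi Ht0 Hloc); specialize (Hsuper x0 t0 Ht0); lra.
Qed.

Lemma Rpower_ge_bernoulli p m : 0 < p -> 1 <= m -> 1 + m * (p - 1) <= Rpower p m.
Proof.
  intros Hp Hm.
  assert (Hln : 1 - 1 / p <= ln p).
  { pose proof (exp_ineq1_le (ln (1 / p))).
    rewrite exp_ln in H by (apply Rdiv_lt_0_compat; lra).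
    unfold Rdiv in *; rewrite Rmult_1_l, ln_Rinv in * by lra; lra. }
  replace m with (1 + (m - 1)) at 2 by ring; rewrite Rpower_plus, Rpower_1 by lra.
  assert (H1 : 1 + (m - 1) * ln p <= Rpower p (m - 1)) by (unfold Rpower; apply exp_ineq1_le).
  assert (H2 : (m - 1) * (1 - 1 / p) <= (m - 1) * ln p) by (apply Rmult_le_compat_l; lra).
  apply (Rmult_le_compat_l p) in H1; [|lra].
  replace (1 + m * (p - 1)) with (p * (1 + (m - 1) * (1 - 1 / p))) by (field; lra).
  apply Rmult_le_compat_l with (r := p) in H2; lra.
Qed.

Lemma Rpower_le_base p m : 0 < p <= 1 -> 1 <= m -> Rpower p m <= p.
Proof.
  intros Hp Hm.
  replace m with (1 + (m - 1)) by ring; rewrite Rpower_plus, Rpower_1 by lra.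
  assert (Rpower p (m - 1) <= 1).
  { replace 1 with (Rpower 1 (m - 1)) at 2 by (unfold Rpower; rewrite ln_1, Rmult_0_r; apply exp_0).
    apply Rle_Rpower_l; lra. }
  assert (0 < Rpower p (m - 1)) by apply exp_pos.
  nra.
Qed.

Lemma Rabs_sub_le_lipschitz (F : R -> R) L p q ga :
  (forall p q, Rabs p <= 2 -> Rabs q <= 2 -> Rabs (F p - F q) <= L * Rabs (p - q)) ->
  Rabs p <= 1 -> Rabs (q - p) <= ga -> ga <= 1 -> Rabs (F q - F p) <= Rabs L * ga.
Proof.
  intros HL Hp Hqp Hga.
  assert (Rabs q <= 2).
  { replace q with (p + (q - p)) by ring; eapply Rle_trans; [apply Rabs_triang|lra]. }
  eapply Rle_trans; [apply HL; lra|].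
  pose proof (Rle_abs L); pose proof (Rabs_pos L); pose proof (Rabs_pos (q - p)); nra.
Qed.

Lemma F_le_id (F : R -> R) m p : 1 < m ->
  (forall p, 0 < p <= 1 -> F p = Rpower p m / m) -> (forall p, -1 <= p <= 0 -> F p <= p) ->
  Rabs p <= 1 -> F p <= p.
Proof.
  intros Hm HF Hneg Hp; apply Rabs_le_between in Hp; destruct (Rle_dec p 0); [apply Hneg; lra|].
  rewrite HF by lra; pose proof (Rpower_le_base p m ltac:(lra) ltac:(lra)).
  assert (0 < Rpower p m) by apply exp_pos.
  apply (Rmult_le_reg_r m); [lra|]; unfold Rdiv; rewrite Rmult_assoc, Rinv_l by lra; nra.
Qed.

Lemma F_ge_sub (F : R -> R) m p : 1 < m -> (forall p, 0 < p <= 1 -> F p = Rpower p m / m) ->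
  0 < p <= 1 -> p - (1 - 1 / m) <= F p.
Proof.
  intros Hm HF Hp; rewrite HF by lra; pose proof (Rpower_ge_bernoulli p m ltac:(lra) ltac:(lra)).
  apply (Rmult_le_reg_r m); [lra|].
  replace ((p - (1 - 1 / m)) * m) with (1 + m * (p - 1)) by (field; lra).
  replace (Rpower p m / m * m) with (Rpower p m) by (field; lra); lra.
Qed.

Ltac continuity_2d_step :=
  first [ apply continuity_2d_pt_const
        | apply continuity_2d_pt_id1
        | apply continuity_2d_pt_id2
        | apply continuity_2d_pt_plus
        | apply continuity_2d_pt_mult
        | apply continuity_2d_pt_opp
        | apply continuity_2d_pt_inv
        | apply (continuity_1d_2d_pt_comp exp); [apply derivable_continuous_pt, derivable_pt_exp|]
        | apply (continuity_1d_2d_pt_comp sqrt); [apply continuity_pt_sqrt|]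
        | apply (continuity_1d_2d_pt_comp gauss_int); [apply continuity_gauss_int|]
        | apply (continuity_1d_2d_pt_comp gauss_int2); [apply continuity_gauss_int2|] ].
Ltac continuity_2d := unfold Rdiv, Rminus; repeat continuity_2d_step.

Definition rho (x : R) : R := sqrt (1 + x * x).
Definition rho' (x : R) : R := x / sqrt (1 + x * x).
Definition rho'' (x : R) : R := / (sqrt (1 + x * x) * (1 + x * x)).

Lemma one_plus_sqr_pos x : 0 < 1 + x * x.
Proof. nra. Qed.

Lemma ratio_sqrt_bound a d : 0 < d -> - 1 < a / sqrt (a * a + d * d) < 1.
Proof.
  intros Hd.
  assert (Habs : Rabs a < sqrt (a * a + d * d)).
  { rewrite <- sqrt_Rsqr_abs; apply sqrt_lt_1; unfold Rsqr; nra. }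
  apply Rabs_lt_between in Habs; set (S := sqrt (a * a + d * d)) in *.
  split; apply (Rmult_lt_reg_r S); try lra; replace (a / S * S) with a by (field; lra); lra.
Qed.

Lemma rho_ge x : Rabs x <= rho x.
Proof. unfold rho; rewrite <- sqrt_Rsqr_abs; apply sqrt_le_1; unfold Rsqr; nra. Qed.

Lemma rho_0 : rho 0 = 1.
Proof. unfold rho; rewrite Rmult_0_r, Rplus_0_r; apply sqrt_1. Qed.

Lemma Rabs_rho'_le x : Rabs (rho' x) <= 1.
Proof.
  unfold rho'; replace (1 + x * x) with (x * x + 1 * 1) by ring.
  pose proof (ratio_sqrt_bound x 1 ltac:(lra)); apply Rabs_le; lra.
Qed.

Lemma rho''_le x : rho'' x <= 1.
Proof.
  unfold rho''; pose proof (one_plus_sqr_pos x).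
  assert (1 <= sqrt (1 + x * x)) by (rewrite <- sqrt_1 at 1; apply sqrt_le_1_alt; nra).
  assert (1 <= sqrt (1 + x * x) * (1 + x * x))
    by (rewrite <- (Rmult_1_l 1) at 1; apply Rmult_le_compat; nra).
  apply (Rle_trans _ (/ 1)); [apply Rinv_le_contravar; lra | rewrite Rinv_1; lra].
Qed.

Definition smooth_pos (de w : R) : R := (w + sqrt (w * w + de * de)) / 2.
Definition smooth_pos' (de w : R) : R := (1 + w / sqrt (w * w + de * de)) / 2.

Lemma smooth_pos'_range de w : 0 < de -> 0 < smooth_pos' de w < 1.
Proof. intros Hd; unfold smooth_pos'; pose proof (ratio_sqrt_bound w de Hd); lra. Qed.

Lemma smooth_pos_ge de w : 0 < de -> Rmax w 0 <= smooth_pos de w.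
Proof.
  intros Hd; unfold smooth_pos.
  assert (Rabs w <= sqrt (w * w + de * de))
    by (rewrite <- sqrt_Rsqr_abs; apply sqrt_le_1_alt; unfold Rsqr; nra).
  unfold Rmax, Rabs in *; destruct Rle_dec, Rcase_abs; lra.
Qed.

Lemma smooth_pos_0 de : 0 < de -> smooth_pos de 0 = de / 2.
Proof.
  intros Hd; unfold smooth_pos; rewrite Rmult_0_r, !Rplus_0_l, sqrt_square; lra.
Qed.

(** * Upper bound for the inviscid solution *)

Definition HJ_super (de eta ga K : R) (x t : R) : R :=
  smooth_pos de (x - t + 1) + eta * t + ga * (K * t + rho x).

Section HJSupersolution.
Variables de eta ga K : R.
Hypothesis Hde : 0 < de.

Let Hsq : forall w, 0 < w * w + de * de.
Proof. intros; nra. Qed.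

Lemma dt_HJ_super x t : dt (HJ_super de eta ga K) x t = - smooth_pos' de (x - t + 1) + eta + ga * K.
Proof.
  unfold dt; apply is_derive_unique; unfold HJ_super, smooth_pos, smooth_pos', rho.
  pose proof (sqrt_lt_R0 _ (Hsq (x - t + 1))); pose proof (one_plus_sqr_pos x).
  auto_derive; [repeat split; auto|]. unfold Rminus in *; field; lra.
Qed.

Lemma dx_HJ_super x t : dx (HJ_super de eta ga K) x t = smooth_pos' de (x - t + 1) + ga * rho' x.
Proof.
  unfold dx; apply is_derive_unique; unfold HJ_super, smooth_pos, smooth_pos', rho, rho'.
  pose proof (sqrt_lt_R0 _ (Hsq (x - t + 1))); pose proof (sqrt_lt_R0 _ (one_plus_sqr_pos x)).
  auto_derive; [repeat split; auto; apply one_plus_sqr_pos|]. unfold Rminus in *; field; lra.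
Qed.

Lemma C1_test_HJ_super : C1_test (HJ_super de eta ga K).
Proof.
  intros x t.
  assert (Hr1 : forall w, 0 <= w * w + de * de) by (intros; apply Rlt_le, Hsq).
  assert (Hr2 : forall z, 0 <= 1 + z * z) by (intros; apply Rlt_le, one_plus_sqr_pos).
  assert (Hq1 : forall w, sqrt (w * w + de * de) <> 0) by (intros; apply Rgt_not_eq, sqrt_lt_R0, Hsq).
  assert (Hq2 : forall z, sqrt (1 + z * z) <> 0)
    by (intros; apply Rgt_not_eq, sqrt_lt_R0, one_plus_sqr_pos).
  repeat split.
  - unfold HJ_super, smooth_pos, rho; auto_derive; repeat split; auto; apply one_plus_sqr_pos.
  - unfold HJ_super, smooth_pos, rho; auto_derive; repeat split; auto; apply one_plus_sqr_pos.
  - unfold HJ_super, smooth_pos, rho; continuity_2d; auto.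
  - apply (continuity_2d_pt_ext (fun x t => - smooth_pos' de (x - t + 1) + eta + ga * K)).
    + intros; now rewrite dt_HJ_super.
    + unfold smooth_pos'; continuity_2d; auto.
  - apply (continuity_2d_pt_ext (fun x t => smooth_pos' de (x - t + 1) + ga * rho' x)).
    + intros; now rewrite dx_HJ_super.
    + unfold smooth_pos', rho'; continuity_2d; auto.
Qed.

End HJSupersolution.

Lemma hat_le_smooth_pos de x : 0 < de -> hat x <= smooth_pos de (x + 1).
Proof.
  intros Hd; eapply Rle_trans; [|apply smooth_pos_ge, Hd].
  unfold hat, Rmax, Rabs; repeat destruct Rle_dec; destruct Rcase_abs; lra.
Qed.

Lemma HJ_super_strict (F : R -> R) m L de ga x t :
  1 < m -> (forall p q, Rabs p <= 2 -> Rabs q <= 2 -> Rabs (F p - F q) <= L * Rabs (p - q)) ->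
  (forall p, 0 < p <= 1 -> F p = Rpower p m / m) -> 0 < de -> 0 < ga <= 1 / 2 ->
  let w := HJ_super de (1 - 1 / m) ga (Rabs L + 1) in
  dt w x t + F (dx w x t) > 0.
Proof.
  intros Hm HL HF Hde Hga w; unfold w; rewrite dt_HJ_super, dx_HJ_super by lra.
  set (p := smooth_pos' de (x - t + 1)).
  pose proof (smooth_pos'_range de (x - t + 1) Hde) as Hp; fold p in Hp.
  assert (Hq : Rabs (p + ga * rho' x - p) <= ga).
  { replace (p + ga * rho' x - p) with (ga * rho' x) by ring.
    rewrite Rabs_mult, Rabs_right by lra; pose proof (Rabs_rho'_le x) as Hr.
    apply (Rmult_le_compat_l ga) in Hr; lra. }
  pose proof (Rabs_sub_le_lipschitz F L p (p + ga * rho' x) ga HL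
    ltac:(apply Rabs_le; lra) Hq ltac:(lra)) as HFq.
  apply Rabs_le_between in HFq.
  pose proof (F_ge_sub F m p Hm HF ltac:(lra)); pose proof (Rabs_pos L); nra.
Qed.

Lemma HJ_value_le (m : R) (F : R -> R) (u : R -> R -> R) L de ga :
  1 < m ->
  (forall p q, Rabs p <= 2 -> Rabs q <= 2 -> Rabs (F p - F q) <= L * Rabs (p - q)) ->
  (forall p, 0 < p <= 1 -> F p = Rpower p m / m) ->
  BUC u -> visc_sol_HJ F hat u -> 0 < de -> 0 < ga <= 1 / 2 ->
  u 0 1 <= de / 2 + (1 - 1 / m) + ga * (Rabs L + 2).
Proof.
  intros Hm HL HF Hu Hvisc Hde Hga.
  set (eta := 1 - 1 / m); set (K := Rabs L + 1).
  assert (Heta : 0 < eta) by (unfold eta; enough (1 / m < 1) by lra;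
    apply (Rmult_lt_reg_r m); [lra|]; unfold Rdiv; rewrite Rmult_assoc, Rinv_l; lra).
  pose proof (Rabs_pos L).
  enough (u 0 1 <= HJ_super de eta ga K 0 1) as H01.
  { unfold HJ_super in H01; rewrite Rminus_0_l, Rplus_opp_l, smooth_pos_0, rho_0 in H01 by lra.
    unfold K in H01; lra. }
  apply (HJ_comparison F hat u _ Hvisc Hu (C1_test_HJ_super de eta ga K Hde)); [| | |lra].
  - intros x; unfold HJ_super; rewrite Rminus_0_r.
    pose proof (hat_le_smooth_pos de x Hde); pose proof (rho_ge x); pose proof (Rabs_pos x).
    assert (0 <= ga * (K * 0 + rho x)) by (apply Rmult_le_pos; lra); lra.
  - exists 0, ga; split; [lra|]; intros x t Ht; unfold HJ_super.
    pose proof (smooth_pos_ge de (x - t + 1) Hde); pose proof (Rmax_r (x - t + 1) 0).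
    pose proof (rho_ge x).
    assert (0 <= eta * t) by (apply Rmult_le_pos; lra).
    assert (ga * (Rabs x + t) <= ga * (K * t + rho x)) by (apply Rmult_le_compat_l; unfold K; nra).
    lra.
  - intros x t _; now apply (HJ_super_strict F m L).
Qed.

Lemma HJ_value_le_limit (m : R) (F : R -> R) (u : R -> R -> R) :
  1 < m -> loc_lipschitz F ->
  (forall p, 0 < p <= 1 -> F p = Rpower p m / m) ->
  BUC u -> visc_sol_HJ F hat u -> u 0 1 <= 1 - 1 / m.
Proof.
  intros Hm Hlip HF Hu Hvisc.
  destruct (Hlip 2 ltac:(lra)) as [L HL].
  apply Rle_plus_epsilon; intros e He.
  set (ga := Rmin (1 / 2) (e / (2 * (Rabs L + 2)))).
  pose proof (Rabs_pos L).
  assert (Hga : 0 < ga <= 1 / 2).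
  { split; [apply Rmin_pos; [lra|apply Rdiv_lt_0_compat; lra] | apply Rmin_l]. }
  assert (Hga' : ga * (Rabs L + 2) <= e / 2).
  { apply (Rle_trans _ (e / (2 * (Rabs L + 2)) * (Rabs L + 2))).
    - apply Rmult_le_compat_r; [lra | apply Rmin_r].
    - right; field; lra. }
  pose proof (HJ_value_le m F u L e ga Hm HL HF Hu Hvisc He Hga); lra.
Qed.

(** * Lower bound for the viscous solution *)

(* A [C^1] change of time, equal to the identity on [t >= 0] and bounded below by
   [- c / 2]: it extends test functions defined only for [t > - c] to all of [R x R]. *)
Definition time_clip (c t : R) : R := t + (Rmin t 0 * Rmin t 0) / (2 * c).
Definition time_clip' (c t : R) : R := 1 + Rmin t 0 / c.

Lemma is_derive_time_clip c t : 0 < c -> is_derive (time_clip c) t (time_clip' c t).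
Proof.
  intros Hc; apply is_derive_Reals; intros eps Heps.
  exists (mkposreal _ (Rmult_lt_0_compat _ _ Heps Hc)); simpl; intros h Hh0 Hh.
  unfold time_clip, time_clip'.
  assert (Hrem : Rabs (Rmin (t + h) 0 * Rmin (t + h) 0 - Rmin t 0 * Rmin t 0 - 2 * Rmin t 0 * h) <= h * h)
    by (unfold Rmin; destruct Rle_dec, Rle_dec; apply Rabs_le; split; nra).
  replace ((t + h + Rmin (t + h) 0 * Rmin (t + h) 0 / (2 * c) - (t + Rmin t 0 * Rmin t 0 / (2 * c))) / h
           - (1 + Rmin t 0 / c))
    with ((Rmin (t + h) 0 * Rmin (t + h) 0 - Rmin t 0 * Rmin t 0 - 2 * Rmin t 0 * h) / (2 * c * h))
    by (field; lra).
  assert (Hh' : 0 < Rabs h) by (apply Rabs_pos_lt; auto).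
  rewrite Rabs_div, Rabs_mult, (Rabs_right (2 * c)) by (try apply Rmult_integral_contrapositive; lra).
  apply (Rmult_lt_reg_r (2 * c * Rabs h)); [nra|].
  unfold Rdiv; rewrite Rmult_assoc, Rinv_l, Rmult_1_r by nra.
  assert (h * h = Rabs h * Rabs h) by (rewrite <- Rabs_mult, Rabs_right; nra).
  nra.
Qed.

Lemma continuity_time_clip c t : 0 < c -> continuity_pt (time_clip c) t.
Proof.
  intros Hc; apply continuity_pt_filterlim, (ex_derive_continuous (V := R_NormedModule)).
  eexists; now apply is_derive_time_clip.
Qed.

Lemma continuity_time_clip' c t : continuity_pt (time_clip' c) t.
Proof.
  apply continuity_pt_ext with (f := fun t => 1 + (t - Rabs t) / 2 / c).
  - intros s; unfold time_clip', Rmin, Rabs; destruct Rle_dec, Rcase_abs; try lra; f_equal; f_equal; lra.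
  - reg.
Qed.

Lemma time_clip_gt c t : 0 < c -> - c < time_clip c t.
Proof.
  intros Hc; unfold time_clip, Rmin; destruct Rle_dec.
  - enough (- c / 2 <= t + t * t / (2 * c)) by lra.
    apply (Rmult_le_reg_r (2 * c)); [lra|].
    replace ((t + t * t / (2 * c)) * (2 * c)) with (2 * c * t + t * t) by (field; lra).
    replace (- c / 2 * (2 * c)) with (- (c * c)) by field; pose proof (Rle_0_sqr (t + c)); unfold Rsqr in *; nra.
  - replace (0 * 0 / (2 * c)) with 0 by (field; lra); lra.
Qed.

Lemma time_clip_nonneg c t : 0 < c -> 0 <= t -> time_clip c t = t /\ time_clip' c t = 1.
Proof. intros Hc Ht; unfold time_clip, time_clip'; rewrite Rmin_right by lra; split; field; lra. Qed.

Definition C21_at (phi : R -> R -> R) (x t : R) : Prop :=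
  ex_derive (fun s => phi x s) t /\ ex_derive (fun y => phi y t) x /\
  continuity_2d_pt phi x t /\ continuity_2d_pt (dt phi) x t /\
  continuity_2d_pt (dx phi) x t /\
  ex_derive (fun y => dx phi y t) x /\ continuity_2d_pt (dxx phi) x t.

Lemma dt_time_clip phi c x t : 0 < c -> ex_derive (fun s => phi x s) (time_clip c t) ->
  dt (fun x t => phi x (time_clip c t)) x t = dt phi x (time_clip c t) * time_clip' c t.
Proof.
  intros Hc Hd; unfold dt.
  rewrite (Derive_comp (fun s => phi x s) (time_clip c) t Hd)
    by (eexists; now apply is_derive_time_clip).
  rewrite (is_derive_unique _ _ _ (is_derive_time_clip c t Hc)); ring.
Qed.

Lemma derivs_time_clip phi c x t : 0 < c -> 0 <= t -> ex_derive (fun s => phi x s) t ->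
  let Phi := fun x t => phi x (time_clip c t) in
  dt Phi x t = dt phi x t /\ dx Phi x t = dx phi x t /\ dxx Phi x t = dxx phi x t.
Proof.
  intros Hc Ht Hd Phi; destruct (time_clip_nonneg c t Hc Ht) as [Hs Hs'].
  unfold Phi; repeat split; [|unfold dx; now rewrite Hs | unfold dxx, dx; now rewrite Hs].
  rewrite dt_time_clip, Hs, Hs', Rmult_1_r; auto; now rewrite Hs.
Qed.

Lemma C21_test_time_clip phi c : 0 < c -> (forall x t, - c < t -> C21_at phi x t) ->
  C21_test (fun x t => phi x (time_clip c t)).
Proof.
  intros Hc H.
  assert (Hcomp : forall f x t, continuity_2d_pt f x (time_clip c t) ->
                  continuity_2d_pt (fun u v => f u (time_clip c v)) x t)
    by (intros; apply continuity_2d_pt_comp_t; auto; now apply continuity_time_clip).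
  split; intros x t; destruct (H x (time_clip c t) (time_clip_gt c t Hc))
    as [H1 [H2 [H3 [H4 [H5 [H6 H7]]]]]]; repeat split.
  - apply (ex_derive_comp (fun s => phi x s) (time_clip c) t H1).
    eexists; now apply is_derive_time_clip.
  - exact H2.
  - now apply (Hcomp phi).
  - apply (continuity_2d_pt_ext (fun x t => dt phi x (time_clip c t) * time_clip' c t)).
    + intros u v; rewrite dt_time_clip; auto.
      apply (H u (time_clip c v) (time_clip_gt c v Hc)).
    + apply continuity_2d_pt_mult; [now apply (Hcomp (dt phi))|].
      apply (continuity_1d_2d_pt_comp (time_clip' c) (fun u v => v));
        [apply continuity_time_clip' | apply continuity_2d_pt_id2].
  - now apply (Hcomp (dx phi)).
  - exact H6.
  - now apply (Hcomp (dxx phi)).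
Qed.

Definition heat_scale (eps tau t : R) : R := 2 * sqrt (eps * (t + tau)).

Definition parab_sub (eps tau lam Dc ga K : R) (x t : R) : R :=
  lam * heat_hat (heat_scale eps tau t) (x - t) - Dc - ga * (K * t + rho x).

Section ParabolicSubsolution.
Variables eps tau lam Dc ga K : R.
Hypothesis Heps : 0 < eps.

Let S t := heat_scale eps tau t.

Lemma heat_scale_pos t : 0 < t + tau -> 0 < S t.
Proof. intros Ht; unfold S, heat_scale; enough (0 < sqrt (eps * (t + tau))) by lra; apply sqrt_lt_R0; nra. Qed.

(* [heat_hat (S t) (x - t)] solves the transported heat equation [v_t + v_x = eps v_xx]. *)
Lemma dt_parab_sub x t : 0 < t + tau -> dt (parab_sub eps tau lam Dc ga K) x t =
  lam * (eps * heat_hat_dyy (S t) (x - t) - heat_hat_dy (S t) (x - t)) - ga * K.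
Proof.
  intros Ht; unfold dt; apply is_derive_unique.
  pose proof (sqrt_lt_R0 (eps * (t + tau)) ltac:(nra)); pose proof (one_plus_sqr_pos x).
  unfold parab_sub, S, heat_hat, heat_abs, heat_scale, heat_hat_dyy, heat_hat_dy, rho.
  auto_derive; [repeat split; auto; try lra; nra|].
  rewrite !Derive_gauss_int2; unfold gauss_int2, Rdiv, Rminus; field; lra.
Qed.

Lemma dx_parab_sub x t : 0 < t + tau -> dx (parab_sub eps tau lam Dc ga K) x t =
  lam * heat_hat_dy (S t) (x - t) - ga * rho' x.
Proof.
  intros Ht; unfold dx; apply is_derive_unique.
  pose proof (sqrt_lt_R0 (eps * (t + tau)) ltac:(nra)); pose proof (sqrt_lt_R0 _ (one_plus_sqr_pos x)).
  unfold parab_sub, S, heat_hat, heat_abs, heat_scale, heat_hat_dy, rho, rho'.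
  auto_derive; [repeat split; auto; try lra; apply one_plus_sqr_pos|].
  rewrite !Derive_gauss_int2; unfold Rdiv, Rminus; field; lra.
Qed.

Lemma is_derive_dx_parab_sub x t : 0 < t + tau ->
  is_derive (fun y => lam * heat_hat_dy (S t) (y - t) - ga * rho' y) x
    (lam * heat_hat_dyy (S t) (x - t) - ga * rho'' x).
Proof.
  intros Ht; pose proof (sqrt_lt_R0 (eps * (t + tau)) ltac:(nra)).
  pose proof (one_plus_sqr_pos x); pose proof (sqrt_lt_R0 _ H0).
  assert (Hq : sqrt (1 + x * x) * sqrt (1 + x * x) = 1 + x * x) by (apply sqrt_sqrt; lra).
  unfold S, heat_scale, heat_hat_dy, heat_hat_dyy, rho', rho''.
  auto_derive; [repeat split; auto; lra|].
  rewrite !Derive_gauss_int; set (q := sqrt (1 + x * x)) in *; rewrite Hq.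
  unfold Rdiv, Rminus; field; lra.
Qed.

Lemma dxx_parab_sub x t : 0 < t + tau -> dxx (parab_sub eps tau lam Dc ga K) x t =
  lam * heat_hat_dyy (S t) (x - t) - ga * rho'' x.
Proof.
  intros Ht; unfold dxx.
  rewrite (Derive_ext _ (fun y => lam * heat_hat_dy (S t) (y - t) - ga * rho' y))
    by (intros; now apply dx_parab_sub).
  now apply is_derive_unique, is_derive_dx_parab_sub.
Qed.

Lemma C21_at_parab_sub x t : 0 < t + tau -> C21_at (parab_sub eps tau lam Dc ga K) x t.
Proof.
  intros Ht; pose proof (sqrt_lt_R0 (eps * (t + tau)) ltac:(nra)).
  pose proof (one_plus_sqr_pos x); pose proof (sqrt_lt_R0 _ (one_plus_sqr_pos x)).
  assert (Hloc : forall P : R -> R -> Prop, (forall u v, 0 < v + tau -> P u v) -> locally_2d P x t).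
  { intros P HP; exists (mkposreal _ Ht); simpl; intros u v _ Hv.
    apply HP; apply Rabs_lt_between in Hv; lra. }
  repeat split.
  - unfold parab_sub, heat_hat, heat_abs, heat_scale, rho; auto_derive; repeat split; auto; try lra; nra.
  - unfold parab_sub, heat_hat, heat_abs, heat_scale, rho; auto_derive; repeat split; auto; lra.
  - unfold parab_sub, heat_hat, heat_abs, heat_scale, rho; continuity_2d;
      try apply Rgt_not_eq; try lra; nra.
  - apply (continuity_2d_pt_ext_loc (fun x t =>
      lam * (eps * heat_hat_dyy (S t) (x - t) - heat_hat_dy (S t) (x - t)) - ga * K)).
    + apply Hloc; intros u v Hv; now rewrite dt_parab_sub.
    + unfold S, heat_hat_dyy, heat_hat_dy, heat_scale; continuity_2d; try apply Rgt_not_eq; try lra; nra.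
  - apply (continuity_2d_pt_ext_loc (fun x t => lam * heat_hat_dy (S t) (x - t) - ga * rho' x)).
    + apply Hloc; intros u v Hv; now rewrite dx_parab_sub.
    + unfold S, heat_hat_dy, heat_scale, rho'; continuity_2d; try apply Rgt_not_eq; try lra; nra.
  - eapply ex_derive_ext; [intros y; symmetry; now apply dx_parab_sub|].
    eexists; now apply is_derive_dx_parab_sub.
  - apply (continuity_2d_pt_ext_loc (fun x t => lam * heat_hat_dyy (S t) (x - t) - ga * rho'' x)).
    + apply Hloc; intros u v Hv; now rewrite dxx_parab_sub.
    + unfold S, heat_hat_dyy, heat_scale, rho''; continuity_2d; try apply Rgt_not_eq; try lra; nra.
Qed.

End ParabolicSubsolution.

Lemma parab_sub_strict (F : R -> R) m L eps tau lam Dc ga x t :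
  0 < eps < 1 -> 0 < lam -> lam * (2 * gauss_int_ub) <= 1 -> 1 < m ->
  (forall p q, Rabs p <= 2 -> Rabs q <= 2 -> Rabs (F p - F q) <= L * Rabs (p - q)) ->
  (forall p, 0 < p <= 1 -> F p = Rpower p m / m) -> (forall p, -1 <= p <= 0 -> F p <= p) ->
  0 < ga <= 1 / 2 -> 0 < t + tau ->
  let phi := parab_sub eps tau lam Dc ga (Rabs L + 1) in
  dt phi x t + F (dx phi x t) - eps * dxx phi x t < 0.
Proof.
  intros Heps Hlam Hlam1 Hm HL HF Hneg Hga Ht phi; unfold phi.
  rewrite dt_parab_sub, dx_parab_sub, dxx_parab_sub by (auto; lra).
  set (s := heat_scale eps tau t).
  assert (Hs : 0 < s) by (apply heat_scale_pos; lra).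
  set (p := lam * heat_hat_dy s (x - t)).
  assert (Hp : Rabs p <= 1).
  { unfold p; rewrite Rabs_mult, Rabs_right by lra.
    pose proof (Rabs_heat_hat_dy_le s (x - t) Hs).
    apply (Rmult_le_compat_l lam) in H; lra. }
  assert (Hq : Rabs (p - ga * rho' x - p) <= ga).
  { replace (p - ga * rho' x - p) with (- (ga * rho' x)) by ring.
    rewrite Rabs_Ropp, Rabs_mult, (Rabs_right ga) by lra; pose proof (Rabs_rho'_le x).
    apply (Rmult_le_compat_l ga) in H; lra. }
  pose proof (Rabs_sub_le_lipschitz F L p (p - ga * rho' x) ga HL Hp Hq ltac:(lra)) as HFq.
  apply Rabs_le_between in HFq.
  pose proof (F_le_id F m p Hm HF Hneg Hp).
  pose proof (rho''_le x); pose proof (Rabs_pos L).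
  assert (eps * (ga * rho'' x) < ga).
  { assert (0 < rho'' x) by (apply Rinv_0_lt_compat, Rmult_lt_0_compat;
      [apply sqrt_lt_R0|]; apply one_plus_sqr_pos).
    assert (0 < ga * rho'' x <= ga) by (split; [|apply (Rmult_le_compat_l ga) in H0]; nra).
    set (g := ga * rho'' x) in *; nra. }
  unfold p in *; lra.
Qed.

Lemma parab_value_ge (eps m : R) (F : R -> R) (ueps : R -> R -> R) L tau lam ga :
  0 < eps < 1 -> 0 < tau -> 0 < lam -> lam * (2 * gauss_int_ub) <= 1 -> 1 < m ->
  (forall p q, Rabs p <= 2 -> Rabs q <= 2 -> Rabs (F p - F q) <= L * Rabs (p - q)) ->
  (forall p, 0 < p <= 1 -> F p = Rpower p m / m) -> (forall p, -1 <= p <= 0 -> F p <= p) ->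
  BUC ueps -> visc_sol_parabolic eps F hat ueps -> 0 < ga <= 1 / 2 ->
  lam * (heat_hat (heat_scale eps tau 1) 1 - heat_hat (heat_scale eps tau 0) 1) - ga * (Rabs L + 2)
  <= ueps 0 1.
Proof.
  intros Heps Htau Hlam Hlam1 Hm HL HF Hneg Hu Hvisc Hga.
  set (Dc := lam * heat_hat (heat_scale eps tau 0) 1); set (K := Rabs L + 1).
  set (phi := parab_sub eps tau lam Dc ga K).
  set (Phi := fun x t => phi x (time_clip tau t)).
  assert (HPhi : forall x t, 0 <= t -> Phi x t = phi x t)
    by (intros x t Ht; unfold Phi; now rewrite (proj1 (time_clip_nonneg tau t Htau Ht))).
  assert (Hs : forall t, 0 <= t -> 0 < heat_scale eps tau t) by (intros; apply heat_scale_pos; lra).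
  pose proof (Rabs_pos L).
  enough (Phi 0 1 <= ueps 0 1) as H01.
  { rewrite HPhi in H01 by lra; unfold phi, parab_sub in H01.
    rewrite Rminus_0_l, heat_hat_opp, rho_0 in H01; unfold Dc, K in H01; lra. }
  apply (parabolic_comparison eps F hat ueps Phi Hvisc Hu); [| | | |lra].
  - apply C21_test_time_clip; auto; intros x t Ht; apply C21_at_parab_sub; lra.
  - intros x; rewrite HPhi by lra; unfold phi, parab_sub; rewrite Rminus_0_r.
    pose proof (heat_hat_le_hat (heat_scale eps tau 0) x (Hs 0 (Rle_refl 0))) as Hhat.
    apply (Rmult_le_compat_l lam) in Hhat; [|lra].
    assert (0 <= ga * (K * 0 + rho x))
      by (apply Rmult_le_pos; [lra|]; pose proof (rho_ge x); pose proof (Rabs_pos x); lra).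
    assert (lam * (2 * gauss_int_ub) * hat x <= hat x).
    { assert (Hh : 0 <= hat x) by apply Rmax_r.
      pose proof (Rmult_le_compat_r (hat x) _ _ Hh Hlam1); lra. }
    unfold Dc; lra.
  - exists (1 - Dc), ga; split; [lra|]; intros x t Ht; rewrite HPhi by lra; unfold phi, parab_sub.
    pose proof (heat_hat_le (heat_scale eps tau t) (x - t) (Hs t Ht)).
    apply (Rmult_le_compat_l lam) in H0; [|lra].
    pose proof (rho_ge x).
    assert (ga * (Rabs x + t) <= ga * (K * t + rho x)) by (apply Rmult_le_compat_l; unfold K; nra).
    lra.
  - intros x t Ht; unfold Phi.
    destruct (derivs_time_clip phi tau x t Htau ltac:(lra)) as [-> [-> ->]].
    { apply (C21_at_parab_sub eps tau lam Dc ga K (proj1 Heps) x t ltac:(lra)). }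
    apply (parab_sub_strict F m L); auto; lra.
Qed.

Lemma parab_value_ge_limit (eps m : R) (F : R -> R) (ueps : R -> R -> R) tau lam :
  0 < eps < 1 -> 0 < tau -> 0 < lam -> lam * (2 * gauss_int_ub) <= 1 -> 1 < m -> loc_lipschitz F ->
  (forall p, 0 < p <= 1 -> F p = Rpower p m / m) -> (forall p, -1 <= p <= 0 -> F p <= p) ->
  BUC ueps -> visc_sol_parabolic eps F hat ueps ->
  lam * (heat_hat (heat_scale eps tau 1) 1 - heat_hat (heat_scale eps tau 0) 1) <= ueps 0 1.
Proof.
  intros Heps Htau Hlam Hlam1 Hm Hlip HF Hneg Hu Hvisc.
  destruct (Hlip 2 ltac:(lra)) as [L HL].
  apply Rle_plus_epsilon with (r2 := ueps 0 1); intros e He.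
  set (ga := Rmin (1 / 2) (e / (Rabs L + 2))).
  pose proof (Rabs_pos L).
  assert (Hga : 0 < ga <= 1 / 2).
  { split; [apply Rmin_pos; [lra|apply Rdiv_lt_0_compat; lra] | apply Rmin_l]. }
  assert (Hga' : ga * (Rabs L + 2) <= e).
  { apply (Rle_trans _ (e / (Rabs L + 2) * (Rabs L + 2))).
    - apply Rmult_le_compat_r; [lra | apply Rmin_r].
    - right; field; lra. }
  pose proof (parab_value_ge eps m F ueps L tau lam ga Heps Htau Hlam Hlam1 Hm HL HF Hneg Hu Hvisc Hga).
  lra.
Qed.

Definition tau0 : R := 1 / 1000000.

Lemma heat_hat_gap_ge eps : 0 < eps < 1 / 4 ->
  0.679 * sqrt eps <= heat_hat (heat_scale eps tau0 1) 1 - heat_hat (heat_scale eps tau0 0) 1.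
Proof.
  intros Heps; unfold tau0.
  assert (Hse : 0 < sqrt eps) by (apply sqrt_lt_R0; lra).
  set (S1 := heat_scale eps (1 / 1000000) 1); set (S0 := heat_scale eps (1 / 1000000) 0).
  assert (HS1 : sqrt eps <= S1 / 2).
  { unfold S1, heat_scale; replace (2 * sqrt (eps * (1 + 1 / 1000000)) / 2)
      with (sqrt (eps * (1 + 1 / 1000000))) by field; apply sqrt_le_1_alt; nra. }
  assert (HS0 : S0 = sqrt eps / 500).
  { unfold S0, heat_scale; rewrite Rplus_0_l, sqrt_mult by lra.
    replace (1 / 1000000) with (1 / 1000 * (1 / 1000)) by field; rewrite sqrt_square by lra; field. }
  assert (HX : 0.999999 <= 1 / (S1 * S1)).
  { assert (HSS : S1 * S1 = 4 * (eps * (1 + 1 / 1000000))).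
    { unfold S1, heat_scale.
      replace (2 * sqrt (eps * (1 + 1 / 1000000)) * (2 * sqrt (eps * (1 + 1 / 1000000))))
        with (4 * (sqrt (eps * (1 + 1 / 1000000)) * sqrt (eps * (1 + 1 / 1000000)))) by ring.
      rewrite sqrt_sqrt; nra. }
    rewrite HSS; apply (Rmult_le_reg_r (4 * (eps * (1 + 1 / 1000000)))); [nra|].
    replace (1 / (4 * (eps * (1 + 1 / 1000000))) * (4 * (eps * (1 + 1 / 1000000)))) with 1
      by (field; nra); nra. }
  pose proof (heat_hat_1_ge S1 ltac:(lra)) as Hlow.
  pose proof (heat_hat_1_lb_ge _ HX).
  pose proof (heat_hat_1_le S0 ltac:(lra)).
  assert (sqrt eps * 0.68 <= S1 / 2 * heat_hat_1_lb (1 / (S1 * S1))) by (apply Rmult_le_compat; lra).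
  lra.
Qed.

Lemma gauss_const_le : (exp 1 - 1) / (2 * sqrt PI * exp 1) <= 0.18.
Proof.
  assert (Hsp : 1.772 <= sqrt PI).
  { pose proof PI_ge_314; rewrite <- (sqrt_square 1.772) by lra; apply sqrt_le_1_alt; lra. }
  pose proof exp_neg_1_bounds; pose proof (exp_pos 1).
  assert (He : (exp 1 - 1) / exp 1 = 1 - exp (-1)).
  { replace (exp (-1)) with (/ exp 1); [field; lra|].
    apply (Rmult_eq_reg_r (exp 1)); [|lra].
    rewrite Rinv_l, <- exp_plus by lra; replace (-1 + 1) with 0 by ring; now rewrite exp_0. }
  replace ((exp 1 - 1) / (2 * sqrt PI * exp 1)) with ((exp 1 - 1) / exp 1 / (2 * sqrt PI))
    by (field; lra).
  rewrite He; apply (Rmult_le_reg_r (2 * sqrt PI)); [lra|].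
  unfold Rdiv; rewrite Rmult_assoc, Rinv_l, Rmult_1_r by lra; lra.
Qed.

Theorem proposition4p3 (eps m : R) (F : R -> R) (ueps u : R -> R -> R) :
  0 < eps -> eps < 1/4 ->
  1 < m ->
  1 - 1/m <= (exp 1 - 1) / (2 * sqrt PI * exp 1) * sqrt eps ->
  loc_lipschitz F ->
  F 0 = 0 ->
  (forall p, 0 < p <= 1 -> F p = Rpower p m / m) ->
  (forall p, -1 <= p <= 0 -> F p <= p) ->
  BUC ueps -> visc_sol_parabolic eps F hat ueps ->
  BUC u -> visc_sol_HJ F hat u ->
  Rabs (ueps 0 1 - u 0 1) >= (exp 1 - 1) / (2 * sqrt PI * exp 1) * sqrt eps.
Proof.
  intros He He4 Hm Hc Hlip _ HF Hneg Hbe Hve Hbu Hvu.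
  pose proof gauss_const_le as Hc018.
  set (c := (exp 1 - 1) / (2 * sqrt PI * exp 1)) in *.
  set (lam := 1 / 1.863).
  pose proof (HJ_value_le_limit m F u Hm Hlip HF Hbu Hvu) as Hu.
  pose proof (parab_value_ge_limit eps m F ueps tau0 lam ltac:(lra) ltac:(unfold tau0; lra)
    ltac:(unfold lam; lra) ltac:(unfold lam, gauss_int_ub; lra) Hm Hlip HF Hneg Hbe Hve) as Hue.
  pose proof (heat_hat_gap_ge eps ltac:(lra)) as Hgap.
  assert (Hse : 0 <= sqrt eps) by apply sqrt_pos.
  assert (0 < 1 / m) by (apply Rdiv_lt_0_compat; lra).
  set (k := sqrt eps) in *.
  assert (c * k <= 0.18 * k) by (apply Rmult_le_compat_r; lra).
  unfold lam in *; rewrite Rabs_right; lra.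
Qed.
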